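(* Let two processes $\sigma$ and $\zeta$ be constructed from initial states $\sigma(\cdot,0),\zeta(\cdot,0)\in\Sigma$ with the same realization of the space-time Poisson point process. (a) For a positive integer $m$ let $D_m(t)=\{x:\zeta(x,t)\ge\sigma(x,t)+m\}$. If $x\in D_m(t)$, then $\zeta(x,t)$ has no maximizer $y\in D_m(0)^c$; and if $x\in D_m(t)^c$, then $\sigma(x,t)$ has no maximizer $y\in D_m(0)$. (b) Suppose $\sigma(y,0)\le\zeta(y,0)\le\sigma(y,0)+h$ for all $y\in\mathbb R^d$, for a fixed positive integer $h$. Then $\sigma(x,t)\le\zeta(x,t)\le\sigma(x,t)+h$ for all $x$ and $t\ge0$, and with $A(t)=\{x:\zeta(x,t)=\sigma(x,t)+h\}$ we have $A(t)=\{x:\sigma(x,t)\text{ has a maximizer }y\in A(0)\}$. (c) If $h=1$ in (b), then additionally $A(t)^c=\{x:\zeta(x,t)\text{ has a maximizer }y\in A(0)^c\}$.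
   Context: Order: for $x,y\in\mathbb R^d$, $x\le y$ iff $x_i\le y_i$ for all $i$; $|x|_\infty=\max_i|x_i|$; $d\ge2$. $\mathbb Z^*=\mathbb Z\cup\{\pm\infty\}$. The state space $\Sigma$ is the set of functions $\sigma:\mathbb R^d\to\mathbb Z^*$ such that (i) $x\le y$ implies $\sigma(x)\le\sigma(y)$; (ii) for every cube $[-q\mathbf 1,q\mathbf 1]$ there are finite partitions $-q=s_i^0<\dots<s_i^{m_i}=q$ of each coordinate axis such that $\sigma$ is constant on each rectangle $\prod_i[s_i^{k_i},s_i^{k_i+1})$; (iii) for every $b\in\mathbb R^d$, $\lim_{M\to\infty}\sup\{|y|_\infty^{-d/(d+1)}\sigma(y):y\le b,|y|_\infty\ge M\}=-\infty$. A rate-one Poisson point process on $\mathbb R^d\times(0,\infty)$ is given; $\mathbf H((y,0),(x,t))$ is the maximal number of Poisson points on a strictly increasing chain (coordinatewise order in $\mathbb R^{d+1}$) in $\{(\eta,s):y<\eta\le x,0<s\le t\}$ ($=0$ if $t=0$). Processes are defined by $\sigma(x,t)=\sup_{y\le x}\{\sigma(y,0)+\mathbf H((y,0),(x,t))\}$ and similarly for $\zeta$ (the supremum is attained almost surely). We say $\sigma(x,t)$ has a maximizer $y$ if $y\le x$ and $\sigma(x,t)=\sigma(y,0)+\mathbf H((y,0),(x,t))$. *)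

From HB Require Import structures.
From mathcomp Require Import all_boot all_order all_algebra.
From mathcomp Require Import all_classical all_reals all_analysis.
From Stdlib Require List.
Set Implicit Arguments. Unset Strict Implicit. Unset Printing Implicit Defensive.
Import Order.TTheory GRing.Theory Num.Theory.
Local Open Scope classical_set_scope.
Local Open Scope ring_scope.

Section Defs.
Variables (R : realType) (d : nat).

Definition pt := 'I_d -> R.
Definition spt := (pt * R)%type.

Definition leV (x y : pt) : Prop := forall i, x i <= y i.
Definition ltV (x y : pt) : Prop := forall i, x i < y i.
Definition supnorm (x : pt) : R := \big[Num.max/0]_(i < d) `|x i|.

Definition leST (p q : spt) : Prop := leV p.1 q.1 /\ p.2 <= q.2.
Definition ltST (p q : spt) : Prop := leST p q /\ p <> q.

(* values in Z* = Z u {+oo,-oo}, seen inside \bar R *)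
Definition is_Zstar (v : \bar R) : Prop :=
  v = +oo%E \/ v = -oo%E \/ exists z : int, v = (z%:~R)%:E.

Definition is_state (s : pt -> \bar R) : Prop :=
  (forall x, is_Zstar (s x)) /\
  (forall x y, leV x y -> (s x <= s y)%E) /\
  (* (ii) locally piecewise constant on a finite product grid *)
  (forall q : R, 0 < q ->
     exists part : 'I_d -> seq R,
       (forall i, sorted <%R (part i) /\ (1 < size (part i))%N /\
                  head 0 (part i) = - q /\ last 0 (part i) = q) /\
       (forall x y : pt,
          (forall i, exists k : nat, (k.+1 < size (part i))%N /\
              nth 0 (part i) k <= x i < nth 0 (part i) k.+1 /\
              nth 0 (part i) k <= y i < nth 0 (part i) k.+1) ->
          s x = s y)) /\
  (forall b : pt,
     (fun M : R => ereal_sup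
        [set ((powR (supnorm y) (- (d%:R / (d.+1)%:R)))%:E * s y)%E
          | y in [set y | leV y b /\ M <= supnorm y]])
       @ +oo --> -oo%E).

(* a realization of the point process: a locally finite subset of R^d x (0,oo) *)
Definition is_config (w : set spt) : Prop :=
  (forall p, w p -> 0 < p.2) /\
  (forall q : R, finite_set (w `&` [set p | supnorm p.1 <= q /\ p.2 <= q])).

Fixpoint incr_chain (l : seq spt) : Prop :=
  match l with
  | p :: ((q :: _) as l') => ltST p q /\ incr_chain l'
  | _ => True
  end.

Definition chain_in (w : set spt) (y x : pt) (t : R) (l : seq spt) : Prop :=
  incr_chain l /\
  (forall p, List.In p l -> w p /\ ltV y p.1 /\ leV p.1 x /\ 0 < p.2 <= t).

Definition Hlpp (w : set spt) (y x : pt) (t : R) : \bar R :=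
  ereal_sup [set ((size l)%:R)%:E | l in chain_in w y x t].

Definition evolve (w : set spt) (s0 : pt -> \bar R) (x : pt) (t : R) : \bar R :=
  ereal_sup [set (s0 y + Hlpp w y x t)%E | y in [set y | leV y x]].

Definition maximizer (w : set spt) (s0 : pt -> \bar R) (x : pt) (t : R) (y : pt) : Prop :=
  leV y x /\ evolve w s0 x t = (s0 y + Hlpp w y x t)%E.

End Defs.

From HB Require Import structures.
From mathcomp Require Import all_boot all_order all_algebra.
From mathcomp Require Import all_classical all_reals all_analysis.
From mathcomp Require Import lra zify.
From Stdlib Require List.
Set Implicit Arguments. Unset Strict Implicit. Unset Printing Implicit Defensive.
Import Order.TTheory GRing.Theory Num.Theory.
Local Open Scope classical_set_scope.
Local Open Scope ring_scope.

(* Both processes are suprema of [s y + H((y,0),(x,t))] over the same passage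
   times H, which are finite natural numbers because the configuration is
   locally finite.  Comparing the two suprema through a maximizer of one of
   them gives every claim: a maximizer y of zeta(x,t) satisfies
   zeta(x,t) - sigma(x,t) <= zeta(y,0) - sigma(y,0), a maximizer y of
   sigma(x,t) satisfies the reverse inequality, and an initial gap bounded by
   h stays bounded by h.  For h = 1, integer values leave only the gaps 0
   and 1. *)

Section SpaceTimeOrder.
Variables (R : realType) (d : nat).

Lemma abs_le_supnorm (x : pt R d) i : `|x i| <= supnorm x.
Proof. exact: (le_bigmax 0 (fun i => `|x i|) i). Qed.

Lemma supnorm_ge0 (x : pt R d) : 0 <= supnorm x.
Proof. by apply: (big_ind (fun v => 0 <= v)) => // a b ha hb; rewrite le_max ha. Qed.

Lemma supnorm_between (y p x : pt R d) :
  ltV y p -> leV p x -> supnorm p <= supnorm x + supnorm y.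
Proof.
move=> yp px; apply: bigmax_le => [|i _].
  by rewrite addr_ge0 // supnorm_ge0.
rewrite ler_norml; have := abs_le_supnorm x i; have := abs_le_supnorm y i.
have := supnorm_ge0 x; have := supnorm_ge0 y.
have := yp i; have := px i; have := ler_norm (x i); have := ler_norm (- y i).
rewrite normrN => *; apply/andP; split; lra.
Qed.

Lemma leST_anti (p q : spt R d) :
  leST p q -> leST q p -> p = q.
Proof.
case: p => p1 p2; case: q => q1 q2 [/= h1 h2] [/= h3 h4].
have -> : p2 = q2 by apply: le_anti; rewrite h2 h4.
by congr pair; apply: funext => i; apply: le_anti; rewrite h1 h3.
Qed.

Lemma leST_trans (p q r : spt R d) :
  leST p q -> leST q r -> leST p r.
Proof. by move=> [h1 h2] [h3 h4]; split=> [i|]; [exact: le_trans (h3 i)|exact: le_trans h4]. Qed.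

Definition ltSTb (p q : spt R d) : bool := `[< ltST p q >].

Lemma ltSTb_trans : transitive ltSTb.
Proof.
move=> q p r /asboolP [pq npq] /asboolP [qr nqr]; apply/asboolP.
split; first exact: leST_trans pq qr.
by move=> epr; subst r; apply: npq; exact: leST_anti pq qr.
Qed.

Lemma ltSTb_irr : irreflexive ltSTb.
Proof. by move=> p; apply/asboolP => -[]. Qed.

Lemma incr_chain_sorted (l : seq (spt R d)) : incr_chain l -> sorted ltSTb l.
Proof.
elim: l => [//|p [//|q l] IH] /= [pq ql] /=.
by apply/andP; split; [exact/asboolP | exact: IH].
Qed.

Lemma incr_chain_uniq (l : seq (spt R d)) : incr_chain l -> uniq l.
Proof.
move/incr_chain_sorted; apply: sorted_uniq; [exact: ltSTb_trans|exact: ltSTb_irr].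
Qed.

End SpaceTimeOrder.

Lemma In_mem (T : eqType) (l : seq T) x : x \in l -> List.In x l.
Proof. by elim: l => [//|a l IH]; rewrite inE => /orP [/eqP ->|/IH]; [left|right]. Qed.

Lemma is_ZstarDn (R : realType) (v : \bar R) (n : nat) :
  is_Zstar v -> is_Zstar (v + (n%:R)%:E)%E.
Proof.
case=> [->|[->|[i ->]]]; [by left|by right; left|right; right].
by exists (i + n%:Z); rewrite intrD.
Qed.

Lemma Zstar_squeeze (R : realType) (a b : \bar R) : is_Zstar a -> is_Zstar b ->
  (a <= b <= a + 1%:E)%E -> b <> (a + 1%:E)%E -> b = a.
Proof.
case=> [->|[->|[i ->]]] zb.
- by rewrite leye_eq => /andP [/eqP ->].
- by rewrite leeNy_eq => /andP [_ /eqP ->].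
rewrite -EFinD; case: zb => [->|[->|[j ->]]].
- by rewrite leye_eq andbF.
- by rewrite leNye.
rewrite !lee_fin -intrD1 !ler_int => ij ne.
have {}ne : j <> (i + 1)%R by move=> e; apply: ne; rewrite e intrD1.
by congr EFin; congr intr; lia.
Qed.

Section LastPassage.
Variables (R : realType) (d : nat) (w : set (spt R d)).
Hypothesis hw : is_config w.
Implicit Types (s z : pt R d -> \bar R) (x y : pt R d) (t c : R).

Lemma chain_size_bounded y x t :
  exists N : nat, forall l, chain_in w y x t l -> (size l <= N)%N.
Proof.
pose q := supnorm x + supnorm y + `|t|.
pose F := w `&` [set p : spt R d | supnorm p.1 <= q /\ p.2 <= q].
have finF : finite_set F by case: hw => _; apply.
exists (size (finmap.enum_fset (fset_set F))) => l [incr inl].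
apply: uniq_leq_size; first exact: incr_chain_uniq.
move=> p /In_mem /inl [wp [yp [px /andP [_ ht]]]].
rewrite in_fset_set //; apply/mem_set; split => //; split.
  have := supnorm_between yp px; have := normr_ge0 t; rewrite /q; lra.
have := ler_norm t; have := supnorm_ge0 x; have := supnorm_ge0 y; rewrite /q; lra.
Qed.

Lemma Hlpp_nat y x t : exists n : nat, Hlpp w y x t = (n%:R)%:E.
Proof.
have [N boundN] := chain_size_bounded y x t.
pose P n := `[< exists l, chain_in w y x t l /\ size l = n >].
have P0 : exists n, P n by exists 0%N; apply/asboolP; exists [::].
have PN n : P n -> (n <= N)%N by move=> /asboolP [l [hl <-]]; exact: boundN.
have [n /asboolP [l [hl <-]] n_max] := ex_maxnP P0 PN.
exists (size l); apply: le_anti; apply/andP; split.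
  apply: ge_ereal_sup => _ [l' hl' <-]; rewrite lee_fin ler_nat.
  by apply: n_max; apply/asboolP; exists l'.
by apply: ereal_sup_ubound; exists l.
Qed.

Lemma Hlpp_fin_num y x t : Hlpp w y x t \is a fin_num.
Proof. by have [n ->] := Hlpp_nat y x t. Qed.

Lemma evolve_ubound s x t y : leV y x -> (s y + Hlpp w y x t <= evolve w s x t)%E.
Proof. by move=> yx; apply: ereal_sup_ubound; exists y. Qed.

Lemma evolve_leD s z c x t :
  (forall y, z y <= s y + c%:E)%E -> (evolve w z x t <= evolve w s x t + c%:E)%E.
Proof.
move=> zs; apply: ge_ereal_sup => _ [y yx <-].
by rewrite (le_trans (leeD2r _ (zs y))) // addeAC leeD2r // evolve_ubound.
Qed.

Lemma le_evolve s z x t :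
  (forall y, s y <= z y)%E -> (evolve w s x t <= evolve w z x t)%E.
Proof. by move=> sz; rewrite -[leRHS]adde0; apply: evolve_leD => y; rewrite adde0. Qed.

Lemma maximizer_gap_ge s z c x t y :
  (evolve w s x t + c%:E <= evolve w z x t)%E -> maximizer w z x t y ->
  (s y + c%:E <= z y)%E.
Proof.
move=> gap [yx zy]; rewrite -(leeD2rE _ _ (Hlpp_fin_num y x t)) -zy.
by rewrite (le_trans _ gap) // addeAC leeD2r // evolve_ubound.
Qed.

Lemma evolve_gap_ge s z c x t y :
  maximizer w s x t y -> (s y + c%:E <= z y)%E ->
  (evolve w s x t + c%:E <= evolve w z x t)%E.
Proof.
move=> [yx sy] gap; rewrite sy addeAC.
exact: le_trans (leeD2r _ gap) (evolve_ubound _ _ yx).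
Qed.

Lemma evolve_gap_eq s z c x t :
  (forall y, z y <= s y + c%:E)%E -> (exists y, maximizer w z x t y) ->
  evolve w z x t = (evolve w s x t + c%:E)%E <->
  exists y, maximizer w s x t y /\ z y = (s y + c%:E)%E.
Proof.
move=> zs [y [yx zy]]; split=> [gap|[y' [s_max gap]]]; last first.
  by apply: le_anti; rewrite evolve_leD //= (evolve_gap_ge s_max) // gap.
have Hfin := Hlpp_fin_num y x t.
have zy_ge : (s y + c%:E + Hlpp w y x t <= z y + Hlpp w y x t)%E.
  by rewrite -zy gap addeAC leeD2r // evolve_ubound.
have zy_gap : z y = (s y + c%:E)%E.
  by apply: le_anti; rewrite zs -(leeD2rE _ _ Hfin) zy_ge.
exists y; split=> //; split=> //.
have cfin : c%:E \is a fin_num by [].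
apply: le_anti; rewrite evolve_ubound //= -(leeD2rE _ _ cfin).
by rewrite addeAC -zy_gap -zy -gap lexx.
Qed.

Lemma evolve_Zstar s x t y :
  (forall y, is_Zstar (s y)) -> maximizer w s x t y -> is_Zstar (evolve w s x t).
Proof.
move=> sZ [_ ->]; have [n ->] := Hlpp_nat y x t; exact: is_ZstarDn.
Qed.

Lemma evolve_gap_neq1 s z x t :
  (forall y, is_Zstar (s y)) -> (forall y, is_Zstar (z y)) ->
  (forall y, s y <= z y <= s y + 1%:E)%E ->
  (exists y, maximizer w s x t y) -> (exists y, maximizer w z x t y) ->
  evolve w z x t <> (evolve w s x t + 1%:E)%E <->
  exists y, maximizer w z x t y /\ z y <> (s y + 1%:E)%E.
Proof.
move=> sZ zZ szs [y [yx sy]] [yz z_max]; split=> [ne|[y'' [z_max'' ne]] gap].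
  have ev_eq : evolve w z x t = evolve w s x t.
    apply: Zstar_squeeze ne; [exact: evolve_Zstar (conj yx sy)|exact: evolve_Zstar z_max|].
    by rewrite le_evolve ?evolve_leD // => y0; case/andP: (szs y0).
  have z_at_y : evolve w z x t = (z y + Hlpp w y x t)%E.
    apply: le_anti; rewrite evolve_ubound // andbT ev_eq sy leeD2r //.
    by case/andP: (szs y).
  by exists y; split=> // zy; apply: ne; rewrite z_at_y zy sy addeAC.
apply: ne; apply: le_anti; rewrite (andP (szs y'')).2 /=.
by apply: maximizer_gap_ge z_max''; rewrite gap.
Qed.

End LastPassage.

Unset Implicit Arguments.

Theorem lemma9p1 (R : realType) (d : nat) (hd : (2 <= d)%N)
  (w : set (spt R d)) (hw : is_config w)
  (s0 z0 : pt R d -> \bar R) (hs0 : is_state s0) (hz0 : is_state z0)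
  (attained : forall (x : pt R d) (t : R), 0 <= t ->
     (exists y, maximizer w s0 x t y) /\ (exists y, maximizer w z0 x t y)) :
  (* (a) *)
  (forall (m : nat), (0 < m)%N -> forall (t : R), 0 <= t -> forall x : pt R d,
     ((evolve w z0 x t >= evolve w s0 x t + (m%:R)%:E)%E ->
        ~ exists y, maximizer w z0 x t y /\ ~ (z0 y >= s0 y + (m%:R)%:E)%E) /\
     (~ (evolve w z0 x t >= evolve w s0 x t + (m%:R)%:E)%E ->
        ~ exists y, maximizer w s0 x t y /\ (z0 y >= s0 y + (m%:R)%:E)%E)) /\
  (* (b) *)
  (forall (h : nat), (0 < h)%N ->
     (forall y, (s0 y <= z0 y)%E /\ (z0 y <= s0 y + (h%:R)%:E)%E) ->
     forall (t : R), 0 <= t ->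
       (forall x, (evolve w s0 x t <= evolve w z0 x t)%E /\
                  (evolve w z0 x t <= evolve w s0 x t + (h%:R)%:E)%E) /\
       (forall x, evolve w z0 x t = (evolve w s0 x t + (h%:R)%:E)%E <->
                  exists y, maximizer w s0 x t y /\ z0 y = (s0 y + (h%:R)%:E)%E)) /\
  (* (c) *)
  ((forall y, (s0 y <= z0 y)%E /\ (z0 y <= s0 y + 1%:E)%E) ->
     forall (t : R), 0 <= t -> forall x,
       evolve w z0 x t <> (evolve w s0 x t + 1%:E)%E <->
       exists y, maximizer w z0 x t y /\ z0 y <> (s0 y + 1%:E)%E).
Proof.
split; [|split].
- move=> m _ t _ x; split=> [gap [y [z_max zy]]|gap [y [s_max zy]]].
    exact/zy/(maximizer_gap_ge hw gap z_max).
  exact/gap/(evolve_gap_ge s_max zy).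
- move=> h _ szs t t0; split=> [x|x].
    by split; [apply: le_evolve | apply: evolve_leD] => y; case: (szs y).
  apply: (evolve_gap_eq hw) => [y|]; [by case: (szs y)|exact: (attained x t t0).2].
- move=> szs t t0 x; have [s_max z_max] := attained x t t0.
  have szs' y : (s0 y <= z0 y <= s0 y + 1%:E)%E by case: (szs y) => -> ->.
  exact: (evolve_gap_neq1 hw hs0.1 hz0.1 szs' s_max z_max).
Qed.
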